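(* Let $S$ be an affine semigroup and let $F$ be a face of $\mathrm{pos}(S)$ that is the intersection of $k$ facets $F_1=\mathrm{pos}(S)\cap H_1,\ldots,F_k=\mathrm{pos}(S)\cap H_k$, and let $\sigma_i$ be the primitive linear form associated with $H_i$ ($i=1,\ldots,k$). Suppose that (1) there exist $\gamma_1,\ldots,\gamma_k\in S$ such that $\sigma_i(\gamma_j)=\delta_{ij}$ for all $1\le i,j\le k$; and (2) $\mathrm{grp}(S\cap F)=\mathrm{grp}(S)\cap H_1\cap\cdots\cap H_k$. Then $S_F/U(S_F)$ is a free commutative monoid with basis the images of $\gamma_1,\ldots,\gamma_k$.
   Context: An affine semigroup is a finitely generated submonoid $S$ of $\mathbb{Z}^n$ (containing $0$) with $\mathrm{grp}(S)=\mathbb{Z}^n$. $\mathrm{pos}(S)$ is the set of nonnegative real linear combinations of elements of $S$; a face is its intersection with a supporting hyperplane, a facet is a face of codimension one. Each facet has the form $\mathrm{pos}(S)\cap H$ with $H=\{\sigma=0\}$, $\sigma$ a primitive linear form (relatively prime integer coefficients) with $\sigma\ge0$ on $\mathrm{pos}(S)$, the primitive linear form associated with $H$. $S_F=\{\alpha-\beta:\alpha\in S,\beta\in S\cap F\}$ and $U(S_F)=\mathrm{grp}(S\cap F)$ is its group of units. *)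

From HB Require Import structures.
From mathcomp Require Import all_boot all_order all_algebra.
Set Implicit Arguments. Unset Strict Implicit. Unset Printing Implicit Defensive.
Import Order.TTheory GRing.Theory Num.Theory.
Local Open Scope ring_scope.

(* Z^n is modelled as 'rV[int]_n, R^n as 'rV[R]_n for an ordered field R. *)

Definition inS (n : nat) (gens : seq 'rV[int]_n) (x : 'rV[int]_n) : Prop :=
  exists c : 'I_(size gens) -> nat, x = \sum_(i < size gens) gens`_i *+ c i.

Definition inGrp (n : nat) (P : 'rV[int]_n -> Prop) (x : 'rV[int]_n) : Prop :=
  exists (s : seq 'rV[int]_n) (c : 'I_(size s) -> int),
    (forall i : 'I_(size s), P s`_i) /\ x = \sum_(i < size s) s`_i *~ c i.

Definition affine (n : nat) (gens : seq 'rV[int]_n) : Prop :=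
  forall x : 'rV[int]_n, inGrp (inS gens) x.

Definition embR (R : realFieldType) (n : nat) (x : 'rV[int]_n) : 'rV[R]_n :=
  map_mx (fun z : int => z%:~R) x.

(* pos(S): nonnegative (R-)linear combinations of elements of S
   (equivalently of the generators). *)
Definition inPos (R : realFieldType) (n : nat) (gens : seq 'rV[int]_n)
    (x : 'rV[R]_n) : Prop :=
  exists c : 'I_(size gens) -> R,
    (forall i, 0 <= c i) /\ x = \sum_(i < size gens) c i *: embR R gens`_i.

Definition lformZ (n : nat) (sigma x : 'rV[int]_n) : int :=
  \sum_(i < n) sigma 0 i * x 0 i.
Definition lformR (R : realFieldType) (n : nat) (sigma : 'rV[int]_n)
    (x : 'rV[R]_n) : R :=
  \sum_(i < n) (sigma 0 i)%:~R * x 0 i.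

Definition primitive (n : nat) (sigma : 'rV[int]_n) : Prop :=
  \big[gcdz/0]_(i < n) sigma 0 i = 1.

Definition set_dim (R : realFieldType) (n : nat) (P : 'rV[R]_n -> Prop)
    (d : nat) : Prop :=
  (exists s : seq 'rV[R]_n, (forall x, x \in s -> P x) /\ \dim <<s>>%VS = d) /\
  (forall s : seq 'rV[R]_n, (forall x, x \in s -> P x) -> (\dim <<s>>%VS <= d)%N).

(* sigma is the primitive linear form associated with a hyperplane
   H = {sigma = 0} such that pos(S) ∩ H is a facet of pos(S):
   sigma primitive, sigma >= 0 on pos(S) (H supporting), and pos(S) ∩ H has
   codimension one in pos(S) (whose dimension is n, since grp(S) = Z^n). *)
Definition facet_form (R : realFieldType) (n : nat) (gens : seq 'rV[int]_n)
    (sigma : 'rV[int]_n) : Prop :=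
  [/\ primitive sigma,
      (forall x : 'rV[R]_n, inPos gens x -> 0 <= lformR sigma x) &
      set_dim (fun x : 'rV[R]_n => inPos gens x /\ lformR sigma x = 0) n.-1].

Definition inFace (R : realFieldType) (n k : nat) (gens : seq 'rV[int]_n)
    (sigma : 'I_k -> 'rV[int]_n) (x : 'rV[R]_n) : Prop :=
  inPos gens x /\ forall i, lformR (sigma i) x = 0.

Definition inSF (R : realFieldType) (n k : nat) (gens : seq 'rV[int]_n)
    (sigma : 'I_k -> 'rV[int]_n) (x : 'rV[int]_n) : Prop :=
  inS gens x /\ inFace gens sigma (embR R x).

Definition inS_F (R : realFieldType) (n k : nat) (gens : seq 'rV[int]_n)
    (sigma : 'I_k -> 'rV[int]_n) (x : 'rV[int]_n) : Prop :=
  exists a b, inS gens a /\ inSF R gens sigma b /\ x = a - b.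

(* U(S_F) = grp(S ∩ F). *)
Definition inU (R : realFieldType) (n k : nat) (gens : seq 'rV[int]_n)
    (sigma : 'I_k -> 'rV[int]_n) (x : 'rV[int]_n) : Prop :=
  inGrp (inSF R gens sigma) x.

Definition comb (n k : nat) (gamma : 'I_k -> 'rV[int]_n) (c : 'I_k -> nat)
  : 'rV[int]_n := \sum_(j < k) gamma j *+ c j.

(* S_F / U(S_F) is a free commutative monoid with basis the images of the
   gamma_j: the monoid map N^k -> S_F/U(S_F), c |-> [sum c_j gamma_j], is
   bijective (gamma_j in S_F is assumed separately). *)
Definition free_quotient_basis (R : realFieldType) (n k : nat)
    (gens : seq 'rV[int]_n) (sigma : 'I_k -> 'rV[int]_n)
    (gamma : 'I_k -> 'rV[int]_n) : Prop :=
  (forall x, inS_F R gens sigma x ->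
     exists c : 'I_k -> nat, inU R gens sigma (x - comb gamma c)) /\
  (forall c c' : 'I_k -> nat,
     inU R gens sigma (comb gamma c - comb gamma c') -> c =1 c').

From HB Require Import structures.
From mathcomp Require Import all_boot all_order all_algebra.
Import Order.TTheory GRing.Theory Num.Theory.
Local Open Scope ring_scope.

(* Every linear form sigma_i is nonnegative on S (it is
   nonnegative on pos(S), which contains S) and vanishes on S ∩ F.  Since
   sigma_i(gamma_j) = delta_ij, the form sigma_i reads off the i-th
   coefficient of a combination sum_j c_j gamma_j.
   - Generation: for x = a - b in S_F (a in S, b in S ∩ F), put
     c_i = sigma_i(a) >= 0.  Then x - sum_j c_j gamma_j lies in grp(S) = Z^n
     and is killed by every sigma_i, hence lies in grp(S ∩ F) = U(S_F) by
     hypothesis (2).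
   - Freeness: if sum c_j gamma_j - sum c'_j gamma_j lies in U(S_F), then by
     (2) it is killed by each sigma_i, i.e. c_i = c'_i. *)

Lemma lformZB (n : nat) (s : 'rV[int]_n) : zmod_morphism (lformZ s).
Proof.
move=> x y; rewrite /lformZ -sumrB; apply: eq_bigr => i _.
by rewrite !mxE mulrBr.
Qed.

HB.instance Definition _ (n : nat) (s : 'rV[int]_n) :=
  GRing.isZmodMorphism.Build _ _ (@lformZ n s) (@lformZB n s).

Lemma lformR_embR (R : realFieldType) (n : nat) (s x : 'rV[int]_n) :
  lformR s (embR R x) = (lformZ s x)%:~R.
Proof.
rewrite /lformR /lformZ rmorph_sum; apply: eq_bigr => i _.
by rewrite /embR mxE rmorphM.
Qed.

Lemma inS_inPos (R : realFieldType) (n : nat) (gens : seq 'rV[int]_n)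
    (x : 'rV[int]_n) :
  inS gens x -> inPos gens (embR R x).
Proof.
case=> c ->; exists (fun i => (c i)%:R); split=> [i|]; first by rewrite ler0n.
apply/matrixP => r s; rewrite /embR mxE !summxE rmorph_sum.
by apply: eq_bigr => j _; rewrite !mxE mulmxnE rmorphMn mulr_natl.
Qed.

Lemma facet_form_ge0 (R : realFieldType) (n : nat) (gens : seq 'rV[int]_n)
    (s x : 'rV[int]_n) :
  facet_form R gens s -> inS gens x -> 0 <= lformZ s x.
Proof.
case=> _ pos_ge0 _ Sx.
by rewrite -(ler0z R) -lformR_embR; apply/pos_ge0/inS_inPos.
Qed.
Arguments facet_form_ge0 {R n gens s x}.

Lemma inSF_lform0 (R : realFieldType) (n k : nat) (gens : seq 'rV[int]_n)
    (sigma : 'I_k -> 'rV[int]_n) (x : 'rV[int]_n) (i : 'I_k) :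
  inSF R gens sigma x -> lformZ (sigma i) x = 0.
Proof.
by case=> _ [_ Fx]; apply/eqP; rewrite -(intr_eq0 R) -lformR_embR Fx.
Qed.
Arguments inSF_lform0 {R n k gens sigma x}.

Lemma lformZ_comb (n k : nat) (sigma gamma : 'I_k -> 'rV[int]_n)
    (c : 'I_k -> nat) (i : 'I_k) :
  (forall i j, lformZ (sigma i) (gamma j) = (i == j)%:Z) ->
  lformZ (sigma i) (comb gamma c) = (c i)%:Z.
Proof.
move=> dual; rewrite /comb raddf_sum (bigD1 i) //= raddfMn /= dual eqxx.
rewrite big1 ?addr0 ?natz // => j /negbTE ji.
by rewrite raddfMn /= dual eq_sym ji mul0rn.
Qed.
Arguments lformZ_comb {n k sigma gamma}.

Section FreeQuotient.

Variables (R : realFieldType) (n k : nat) (gens : seq 'rV[int]_n).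
Variables (sigma gamma : 'I_k -> 'rV[int]_n).

Hypothesis dual : forall i j, lformZ (sigma i) (gamma j) = (i == j)%:Z.
Hypothesis unitsE : forall x, inGrp (inSF R gens sigma) x <->
  (inGrp (inS gens) x /\ forall i, lformZ (sigma i) x = 0).

Lemma comb_generates :
  affine gens -> (forall i, facet_form R gens (sigma i)) ->
  forall x, inS_F R gens sigma x ->
    exists c : 'I_k -> nat, inU R gens sigma (x - comb gamma c).
Proof.
move=> aff facets x [a [b [Sa [SFb ->]]]].
exists (fun i => `|lformZ (sigma i) a|%N); apply/unitsE; split=> [|i].
  exact: aff.
rewrite !raddfB /= (lformZ_comb _ _ dual) (inSF_lform0 i SFb) subr0.
by rewrite abszE ger0_norm ?subrr // (facet_form_ge0 (facets i) Sa).
Qed.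

Lemma comb_free (c c' : 'I_k -> nat) :
  inU R gens sigma (comb gamma c - comb gamma c') -> c =1 c'.
Proof.
move=> /unitsE [_ killed] i; apply/eqP; rewrite -eqz_nat -subr_eq0.
by have := killed i; rewrite raddfB /= !(lformZ_comb _ _ dual) => ->.
Qed.

End FreeQuotient.

(* The hypothesis gamma_j in S only ensures that the gamma_j lie in S_F; the
   bijectivity of N^k -> S_F / U(S_F) does not use it. *)
Theorem mainTheorem5 (R : realFieldType) (n : nat) (gens : seq 'rV[int]_n)
    (k : nat) (sigma gamma : 'I_k -> 'rV[int]_n) :
  affine gens ->
  (forall i, facet_form R gens (sigma i)) ->
  (forall j, inS gens (gamma j)) ->
  (forall i j, lformZ (sigma i) (gamma j) = (i == j)%:Z) ->
  (forall x, inGrp (inSF R gens sigma) x <->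
             (inGrp (inS gens) x /\ forall i, lformZ (sigma i) x = 0)) ->
  free_quotient_basis R gens sigma gamma.
Proof.
move=> aff facets _ dual unitsE; split.
- exact: comb_generates.
- exact: comb_free.
Qed.
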